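(* Let $n \ge 4$ be an even integer, let $m = \frac{n-2}{2}$, and let $G_n$ be the $n$-vertex graph obtained from two disjoint cliques $Q_1, Q_2$, each isomorphic to $K_m$, together with two non-adjacent vertices $u$ and $v$, each adjacent to every vertex of $Q_1 \cup Q_2$ (i.e., $G_n$ is the join of $2K_m$ with $2K_1$). Then $\chi_{DP}(G_n) = \frac{n}{2} + 1$.
   Context: A correspondence assignment $(L,C)$ for a graph $G$ consists of a list $L(v)$ of colors for each vertex $v$ and, for each edge $uv$, a partial matching $C_{uv}$ between $\{u\}\times L(u)$ and $\{v\}\times L(v)$. An $(L,C)$-coloring is a choice $\phi(v)\in L(v)$ for each vertex $v$ such that for every edge $uv$, the pairs $(u,\phi(u))$ and $(v,\phi(v))$ are not matched in $C_{uv}$. $G$ is $k$-correspondence-colorable if it has an $(L,C)$-coloring for every correspondence assignment with all lists of size $k$; the correspondence chromatic number $\chi_{DP}(G)$ is the least such $k$. *)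

From mathcomp Require Import all_boot all_order.
Set Implicit Arguments. Unset Strict Implicit. Unset Printing Implicit Defensive.

(* The correspondence C_{xy} between
   {x} x L(x) and {y} x L(y) is encoded by M x y c d (color c at x is matched
   with color d at y); M x y and M y x describe the same matching. *)

Definition corr_assignment (T : finType) (e : rel T) (k : nat)
    (L : T -> seq nat) (M : T -> T -> nat -> nat -> bool) : Prop :=
  [/\ (forall x, uniq (L x) /\ size (L x) = k),
      (forall x y c d, M x y c d = M y x d c),
      (forall x y c d, M x y c d -> [/\ e x y, c \in L x & d \in L y])
    & (forall x y c d d', M x y c d -> M x y c d' -> d = d')].

Definition corr_coloring (T : finType) (e : rel T)
    (L : T -> seq nat) (M : T -> T -> nat -> nat -> bool) (phi : T -> nat) : Prop :=
  (forall x, phi x \in L x) /\ (forall x y, e x y -> ~~ M x y (phi x) (phi y)).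

Definition k_corr_colorable (T : finType) (e : rel T) (k : nat) : Prop :=
  forall L M, corr_assignment e k L M -> exists phi, corr_coloring e L M phi.

Definition is_chi_DP (T : finType) (e : rel T) (k : nat) : Prop :=
  k_corr_colorable e k /\ (forall j, j < k -> ~ k_corr_colorable e j).

(* G_n on vertex set 'I_n, with m = (n-2)/2:
   Q1 = {0,...,m-1}, Q2 = {m,...,2m-1}, u = 2m, v = 2m+1. *)
Definition Gn_adj (n : nat) : rel 'I_n := fun i j =>
  let m := (n - 2) %/ 2 in
  (i != j) &&
  [|| (i < m) && (j < m),
      [&& m <= i, i < 2 * m, m <= j & j < 2 * m]
    | (2 * m <= i) != (2 * m <= j)].

From mathcomp Require Import all_boot all_order zify.
Set Implicit Arguments. Unset Strict Implicit. Unset Printing Implicit Defensive.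

(* Write n = 2m + 2.  Upper bound: order the vertices u, v first and then each
   clique in index order.  Every vertex has at most m + 1 earlier neighbours
   (none for u and v, which are not adjacent), so colouring greedily along the
   order always finds a colour in lists of size m + 2 = n/2 + 1.
   Lower bound: give every vertex the colours {0, ..., m} and match colours
   identically along every edge except between v and Q2, where colour c at v
   is matched with c + 1 (mod m + 1).  If a colouring gives u and v the same
   colour a, the m vertices of Q2 need distinct colours avoiding both a and
   a + 1; otherwise the m vertices of Q1 need distinct colours avoiding the two
   colours of u and v.  Either way m + 2 colours would be needed.  Truncating
   lists rules out every smaller list size as well. *)

Lemma k_corr_colorable_le (T : finType) (e : rel T) j k :
  j <= k -> k_corr_colorable e j -> k_corr_colorable e k.
Proof.
move=> le_jk col_j L M [HL Msym Me Mfun].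
pose L' x := take j (L x).
pose M' x y c d := [&& M x y c d, c \in L' x & d \in L' y].
have [phi [phiL phiM]] : exists phi, corr_coloring e L' M' phi.
  apply: col_j; split.
  - move=> x; have [uL sL] := HL x.
    by rewrite take_uniq // size_take sL; case: ltngtP le_jk.
  - by move=> x y c d; rewrite /M' Msym andbCA andbC -andbA.
  - by move=> x y c d /and3P[/Me[]].
  - by move=> x y c d d' /and3P[+ _ _] /and3P[+ _ _]; apply: Mfun.
exists phi; split=> [x|x y exy]; first exact: mem_take (phiL x).
by apply: contra (phiM x y exy) => Mxy; rewrite /M' Mxy !phiL.
Qed.

Section Greedy.

Variables (T : finType) (e : rel T) (k : nat).
Variables (L : T -> seq nat) (M : T -> T -> nat -> nat -> bool).
Hypothesis LM : corr_assignment e k L M.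

Lemma free_color_exists x (A : {set T}) (phi : T -> nat) :
  #|A| < k -> exists2 c, c \in L x & forall y, y \in A -> ~~ M x y c (phi y).
Proof.
case: LM => /(_ x)[uL sL] Msym _ Mfun ltAk.
pose blocked c := [exists y in A, M x y c (phi y)].
have [/allP all_blocked | /allPn[c cL /existsPn free]] := boolP (all blocked (L x)).
  pose w c := odflt x [pick y in A | M x y c (phi y)].
  have wP c : c \in L x -> (w c \in A) && M x (w c) c (phi (w c)).
    move=> /all_blocked/existsP[y /andP[Ay Mxy]]; rewrite /w.
    by case: pickP => [z /andP[-> ->] // | /(_ y)]; rewrite Ay Mxy.
  (* Each C_xy is a matching, so a vertex y blocks at most one colour of x. *)
  have w_inj : {in L x &, injective w}.
    move=> c c' /wP/andP[_ Mc] /wP/andP[_ Mc'] wcc'.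
    by rewrite wcc' Msym in Mc; rewrite Msym in Mc'; apply: Mfun Mc Mc'.
  have : #|map w (L x)| <= #|A|.
    by apply/subset_leq_card/subsetP => _ /mapP[c /wP/andP[Ac _] ->].
  by rewrite (card_uniqP _) ?map_inj_in_uniq // size_map sL leqNgt ltAk.
by exists c => // y Ay; have := free y; rewrite Ay.
Qed.

Lemma greedy_corr_coloring (rank : T -> nat) :
  (forall x y, e x y -> rank x != rank y) ->
  (forall x, #|[set y | e x y & rank y < rank x]| < k) ->
  exists phi, corr_coloring e L M phi.
Proof.
move=> rank_edge back_lt; case: (LM) => HL Msym Me _.
suff /(_ (\max_x rank x).+1) [phi [phiL phiM]] : forall N, exists phi,
    (forall x, phi x \in L x) /\
    forall x y, rank x < N -> rank y < N -> ~~ M x y (phi x) (phi y).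
  by exists phi; split=> // x y _; apply: phiM; rewrite ltnS leq_bigmax.
elim=> [|N [phi [phiL phiM]]].
  exists (fun x => nth 0 (L x) 0); split=> // x.
  by apply: mem_nth; have [_ ->] := HL x; apply: leq_ltn_trans (back_lt x).
(* Recolour the vertices of rank N (pairwise non-adjacent) against their earlier neighbours. *)
have /fin_all_exists2[col colL col_free] x := free_color_exists x phi (back_lt x).
exists (fun x => if rank x == N then col x else phi x); split=> [x|]; first by case: ifP.
suff no_clash x y : rank y <= rank x -> rank x <= N ->
    ~~ M x y (if rank x == N then col x else phi x) (if rank y == N then col y else phi y).
  move=> x y; rewrite !ltnS => le_xN le_yN.
  have [le_yx|/ltnW le_xy] := leqP (rank y) (rank x); first exact: no_clash.
  by apply: contra (no_clash y x le_xy le_yN); rewrite Msym.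
move=> le_yx le_xN; apply/negP => Mxy; have [exy _ _] := Me _ _ _ _ Mxy.
have lt_yx : rank y < rank x by rewrite ltn_neqAle eq_sym rank_edge.
have ne_yN : rank y != N by apply: contraTneq lt_yx => ->; rewrite -leqNgt.
rewrite (negbTE ne_yN) in Mxy.
case: eqP Mxy => [_|/eqP ne_xN] Mxy.
  by move: (col_free x y); rewrite inE exy lt_yx Mxy => /(_ isT).
have lt_xN : rank x < N by rewrite ltn_neqAle ne_xN.
by move: (phiM x y lt_xN (ltn_trans lt_yx lt_xN)); rewrite Mxy.
Qed.

End Greedy.

Definition shift_corr (T : finType) (e : rel T) (k : nat) (t : T -> T -> nat) :
    T -> T -> nat -> nat -> bool :=
  fun x y c d => [&& e x y, c < k, d < k & c + t x y == d + t y x %[mod k]].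

Lemma shift_corr_assignment (T : finType) (e : rel T) k t :
  symmetric e -> corr_assignment e k (fun=> iota 0 k) (shift_corr e k t).
Proof.
move=> e_sym; split=> [x|x y c d|x y c d|x y c d d'].
- by rewrite iota_uniq size_iota.
- by rewrite /shift_corr (e_sym y) [in RHS]eq_sym; case: (c < k); case: (d < k).
- by case/and4P=> exy ck dk _; rewrite !mem_iota.
- case/and4P=> _ _ dk Md /and4P[_ _ d'k Md'].
  by move: Md; rewrite (eqP Md') eqn_modDr !modn_small // => /eqP.
Qed.

Lemma bounded_uniq_size k (s : seq nat) :
  uniq s -> all (fun c => c < k) s -> size s <= k.
Proof.
move=> s_uniq /allP s_lt; rewrite -(size_iota 0 k); apply: uniq_leq_size => // c.
by move=> /s_lt c_lt; rewrite mem_iota.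
Qed.

Lemma notin_map (T U : eqType) (f : T -> U) a (s : seq T) :
  {in s, forall y, a != f y} -> a \notin map f s.
Proof. by move=> a_neq; apply/mapP => -[y /a_neq/eqP]. Qed.

Section JoinLowerBound.

Variables (T : finType) (e : rel T) (m : nat) (u v : T) (Q1 Q2 : seq T).
Hypotheses (m_gt0 : 0 < m) (e_sym : symmetric e).
Hypotheses (u_neq_v : u != v) (v_notin_Q : v \notin Q1 ++ Q2) (uniq_Q : uniq (Q1 ++ Q2)).
Hypotheses (size_Q1 : size Q1 = m) (size_Q2 : size Q2 = m).
Hypotheses (clique_Q1 : {in Q1 &, forall x y, x != y -> e x y}).
Hypotheses (clique_Q2 : {in Q2 &, forall x y, x != y -> e x y}).
Hypotheses (join_uv : {in Q1 ++ Q2, forall y, e u y && e v y}).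

Definition join_twist (x y : T) : nat := (x == v) && (y \in Q2).

Lemma join_twist_neq x y : x != v -> join_twist x y = 0.
Proof. by rewrite /join_twist => /negbTE->. Qed.

Lemma join_twist_Q1 y : y \in Q1 -> join_twist v y = 0.
Proof.
move: uniq_Q; rewrite cat_uniq => /and3P[_ /hasPn Q2_notin_Q1 _] yQ1.
by rewrite /join_twist (negbTE (contraL (Q2_notin_Q1 y) yQ1)) andbF.
Qed.

Lemma join_Q_neq_v y : y \in Q1 ++ Q2 -> y != v.
Proof. by apply: contraTneq => ->. Qed.

Section JoinColoring.

Variable phi : T -> nat.
Hypothesis phi_col :
  corr_coloring e (fun=> iota 0 m.+1) (shift_corr e m.+1 join_twist) phi.

Lemma join_color_lt x : phi x < m.+1.
Proof. by have [/(_ x)] := phi_col; rewrite mem_iota. Qed.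

Lemma join_color_ok x y : e x y ->
  phi x + join_twist x y != phi y + join_twist y x %[mod m.+1].
Proof.
by move=> exy; have [_ /(_ x y exy)] := phi_col; rewrite /shift_corr exy !join_color_lt.
Qed.

Lemma join_color_neq x y :
  e x y -> join_twist x y = 0 -> join_twist y x = 0 -> phi x != phi y.
Proof.
move=> exy t_xy t_yx; have := join_color_ok exy.
by rewrite t_xy t_yx !addn0 !modn_small ?join_color_lt.
Qed.

Lemma join_color_u y : y \in Q1 ++ Q2 -> phi u != phi y.
Proof.
move=> yQ; have /andP[euy _] := join_uv yQ.
by rewrite join_color_neq // !join_twist_neq // join_Q_neq_v.
Qed.

Lemma join_color_v_Q1 y : y \in Q1 -> phi v != phi y.
Proof.
move=> yQ1; have yQ : y \in Q1 ++ Q2 by rewrite mem_cat yQ1.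
have /andP[_ evy] := join_uv yQ.
by rewrite join_color_neq // ?join_twist_Q1 // join_twist_neq // join_Q_neq_v.
Qed.

Lemma join_color_v_Q2 y : y \in Q2 -> (phi v).+1 %% m.+1 != phi y.
Proof.
move=> yQ2; have yQ : y \in Q1 ++ Q2 by rewrite mem_cat yQ2 orbT.
have /andP[_ evy] := join_uv yQ; have := join_color_ok evy.
rewrite (@join_twist_neq y v) ?join_Q_neq_v // /join_twist eqxx yQ2.
by rewrite addn0 addn1 (modn_small (join_color_lt y)).
Qed.

Lemma join_clique_colors_uniq Q : {subset Q <= Q1 ++ Q2} -> uniq Q ->
  {in Q &, forall x y, x != y -> e x y} -> uniq (map phi Q).
Proof.
move=> QQ Q_uniq Q_clique; rewrite map_inj_in_uniq // => x y xQ yQ.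
apply: contra_eq => x_neq_y; apply: join_color_neq; first exact: Q_clique.
  by rewrite join_twist_neq // join_Q_neq_v ?QQ.
by rewrite join_twist_neq // join_Q_neq_v ?QQ.
Qed.

Lemma join_too_many_colors a b Q : a < m.+1 -> b < m.+1 -> size Q = m ->
  ~~ uniq (a :: b :: map phi Q).
Proof.
move=> a_lt b_lt Q_size; apply/negP => abQ_uniq.
suff : size (a :: b :: map phi Q) <= m.+1 by rewrite /= size_map Q_size ltnn.
apply: bounded_uniq_size abQ_uniq _.
by rewrite /= a_lt b_lt; apply/allP => _ /mapP[x _ ->]; apply: join_color_lt.
Qed.

Lemma join_colors_Q2 : phi u = phi v ->
  uniq [:: phi u, (phi v).+1 %% m.+1 & map phi Q2].
Proof.
have Q2Q y : y \in Q2 -> y \in Q1 ++ Q2 by rewrite mem_cat orbC => ->.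
move=> uv_eq; rewrite /= inE negb_or uv_eq join_clique_colors_uniq ?andbT //; last first.
  by move: uniq_Q; rewrite cat_uniq => /and3P[].
rewrite -andbA; apply/and3P; split.
- move: (join_color_lt v); rewrite ltnS leq_eqVlt => /predU1P[->|lt_vm].
    by rewrite modnn -lt0n.
  by rewrite modn_small // ltn_eqF.
- by apply: notin_map => y /Q2Q; rewrite -uv_eq; apply: join_color_u.
- exact/notin_map/join_color_v_Q2.
Qed.

Lemma join_colors_Q1 : phi u != phi v -> uniq [:: phi u, phi v & map phi Q1].
Proof.
have Q1Q y : y \in Q1 -> y \in Q1 ++ Q2 by rewrite mem_cat => ->.
move=> uv_neq; rewrite /= inE negb_or uv_neq join_clique_colors_uniq ?andbT //=; last first.
  by move: uniq_Q; rewrite cat_uniq => /and3P[].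
apply/andP; split; apply: notin_map => y yQ1; first exact/join_color_u/Q1Q.
exact: join_color_v_Q1.
Qed.

End JoinColoring.

Lemma join_not_colorable : ~ k_corr_colorable e m.+1.
Proof.
move=> /(_ _ _ (shift_corr_assignment m.+1 join_twist e_sym))[phi phi_col].
have lt := join_color_lt phi_col.
have [uv_eq|uv_neq] := eqVneq (phi u) (phi v).
  have := join_too_many_colors phi_col (lt u) (ltn_pmod (phi v).+1 (ltn0Sn m)) size_Q2.
  by rewrite join_colors_Q2.
by have := join_too_many_colors phi_col (lt u) (lt v) size_Q1; rewrite join_colors_Q1.
Qed.

End JoinLowerBound.

Lemma mem_inord_iota N a b (x : 'I_N.+1) : a + b <= N.+1 ->
  (x \in [seq inord i | i <- iota a b]) = (a <= x < a + b).
Proof.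
move=> le_abN; apply/mapP/idP => [[i] | x_ab].
  by rewrite mem_iota => i_ab ->; rewrite inordK //; apply: leq_trans le_abN; case/andP: i_ab.
by exists (val x); rewrite ?mem_iota ?inord_val.
Qed.

Lemma uniq_inord_iota N a b : a + b <= N.+1 ->
  uniq [seq inord i : 'I_N.+1 | i <- iota a b].
Proof.
move=> le_abN; rewrite map_inj_in_uniq ?iota_uniq // => i j.
rewrite !mem_iota => /andP[_ i_lt] /andP[_ j_lt] /(congr1 (@nat_of_ord _)).
by rewrite !inordK // (leq_trans _ le_abN).
Qed.

Section JoinGraph.

Variable m : nat.

Local Notation n := (2 * m).+2.
Local Notation G := (@Gn_adj n).

Lemma Gn_adjE (x y : 'I_n) : G x y =
  (x != y :> nat) &&
  [|| (x < m) && (y < m), [&& m <= x, x < 2 * m, m <= y & y < 2 * m]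
    | (2 * m <= x) != (2 * m <= y)].
Proof. by rewrite /Gn_adj !subSS subn0 mulKn. Qed.

Definition Gn_u : 'I_n := inord (2 * m).
Definition Gn_v : 'I_n := inord (2 * m).+1.
Definition Gn_Q1 : seq 'I_n := [seq inord i | i <- iota 0 m].
Definition Gn_Q2 : seq 'I_n := [seq inord i | i <- iota m m].

Lemma val_Gn_u : Gn_u = 2 * m :> nat. Proof. by rewrite /Gn_u inordK. Qed.
Lemma val_Gn_v : Gn_v = (2 * m).+1 :> nat. Proof. by rewrite /Gn_v inordK. Qed.

Lemma mem_Gn_Q1 x : (x \in Gn_Q1) = (x < m).
Proof. by rewrite mem_inord_iota; lia. Qed.

Lemma mem_Gn_Q2 x : (x \in Gn_Q2) = (m <= x < 2 * m).
Proof. by rewrite mem_inord_iota addnn -mul2n //; lia. Qed.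

Definition Gn_rank (x : 'I_n) : nat := if 2 * m <= x then 0 else x.+1.

Lemma Gn_rank_neq x y : G x y -> Gn_rank x != Gn_rank y.
Proof. by rewrite Gn_adjE /Gn_rank; case: ifP; case: ifP; lia. Qed.

Lemma Gn_back_degree x : #|[set y | G x y & Gn_rank y < Gn_rank x]| < m.+2.
Proof.
case: (leqP (2 * m) x) => [x_uv|x_Q].
  rewrite (_ : [set y | _] = set0) ?cards0 //; apply/setP => y.
  by rewrite !inE /Gn_rank x_uv ltn0 andbF.
pose lo := if x < m then 0 else m.
pose S := [:: Gn_u, Gn_v & [seq inord i | i <- iota lo (x - lo)]].
apply: (@leq_ltn_trans (size S)).
  apply: leq_trans (card_size S); apply/subset_leq_card/subsetP => y.
  rewrite !inE Gn_adjE mem_inord_iota; last by rewrite /lo; case: ifP; lia.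
  rewrite -!(inj_eq val_inj) /= val_Gn_u val_Gn_v /lo /Gn_rank.
  by have := ltn_ord y; do 3 case: ifP => ?; lia.
by rewrite /= size_map size_iota /lo; case: ifP; lia.
Qed.

Lemma Gn_colorable : k_corr_colorable G m.+2.
Proof.
by move=> L M LM; apply: greedy_corr_coloring LM Gn_rank Gn_rank_neq Gn_back_degree.
Qed.

Hypothesis m_gt0 : 0 < m.

Lemma Gn_not_colorable : ~ k_corr_colorable G m.+1.
Proof.
apply: (@join_not_colorable _ _ _ Gn_u Gn_v Gn_Q1 Gn_Q2 m_gt0).
- by move=> x y; rewrite !Gn_adjE; lia.
- by rewrite -(inj_eq val_inj) /= val_Gn_u val_Gn_v; lia.
- by rewrite mem_cat mem_Gn_Q1 mem_Gn_Q2 val_Gn_v; lia.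
- by rewrite -map_cat -iotaD uniq_inord_iota //; lia.
- by rewrite size_map size_iota.
- by rewrite size_map size_iota.
- by move=> x y; rewrite !mem_Gn_Q1 Gn_adjE => xm ym xy; rewrite xy /=; lia.
- by move=> x y; rewrite !mem_Gn_Q2 Gn_adjE => xm ym xy; rewrite xy /=; lia.
- by move=> y; rewrite mem_cat mem_Gn_Q1 mem_Gn_Q2 !Gn_adjE val_Gn_u val_Gn_v; lia.
Qed.

End JoinGraph.

Theorem theorem3 (n : nat) (hn4 : 4 <= n) (hev : ~~ odd n) :
  is_chi_DP (@Gn_adj n) (n %/ 2 + 1).
Proof.
have [m m_gt0 ->] : exists2 m, 0 < m & n = (2 * m).+2.
  by exists (n %/ 2).-1; have := modn2 n; rewrite (negbTE hev); lia.
rewrite (_ : (2 * m).+2 %/ 2 + 1 = m.+2); last by lia.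
split=> [|j lt_j_m2]; first exact: Gn_colorable.
by apply: contra_not (Gn_not_colorable m_gt0); apply: k_corr_colorable_le; lia.
Qed.
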